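(* Let $A\subset\mathbb R^2$ be the convex quadrilateral with counterclockwise vertices $\mathbf v_1=(0,0)$, $\mathbf v_2=(1,0)$, $\mathbf v_3=(0,1)$, $\mathbf v_4=(-1,\tfrac12)$. Let $a\in[-1,1]$ and $$b=\frac{-12-13a+\sqrt{25^2+11\cdot 13\,(1-a^2)}}{4\cdot 13}.$$ Then the point $(a,b)$ lies on the equator of $A$, i.e. $(a,b)\in A$ and the Gibbs coordinates of $(a,b)$ with respect to $\mathbf v_1,\dots,\mathbf v_4$ coincide with its Wachspress coordinates.
   Context: Signed area: $A(\mathbf u_0,\mathbf u_1,\mathbf u_2)=\tfrac12\det[\mathbf u_1-\mathbf u_0,\mathbf u_2-\mathbf u_0]$. Wachspress coordinates of a point $\mathbf x$ in the interior of a convex polygon with counterclockwise vertices $\mathbf v_1,\dots,\mathbf v_n$ (indices mod $n$): weights $w_i(\mathbf x)=A(\mathbf v_{i-1},\mathbf v_i,\mathbf v_{i+1})/\big(A(\mathbf v_{i-1},\mathbf v_i,\mathbf x)\,A(\mathbf x,\mathbf v_i,\mathbf v_{i+1})\big)$, and coordinates $w(\mathbf x,\mathbf v_i)=w_i(\mathbf x)/\sum_j w_j(\mathbf x)$. For $\mathbf x$ on an edge $[\mathbf v_j,\mathbf v_{j+1}]$ the Wachspress coordinates are the barycentric coordinates of $\mathbf x$ with respect to $\mathbf v_j,\mathbf v_{j+1}$ and $0$ for all other vertices. Gibbs coordinates of $\mathbf x$: the unique probability distribution $(p_i)$ on $\{\mathbf v_1,\dots,\mathbf v_n\}$ with $\sum_i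 p_i\mathbf v_i=\mathbf x$ that maximizes the entropy $-\sum_i p_i\log p_i$ (with $0\log0=0$). The equator is the set of points of $A$ where Gibbs and Wachspress coordinates coincide. *)

From Stdlib Require Import Reals Lra Arith.
Open Scope R_scope.

Definition pt : Type := (R * R)%type.

(* The quadrilateral's vertices, indexed 0..3 (paper's v_1..v_4), indices mod 4. *)
Definition vx (i : nat) : R :=
  match (i mod 4)%nat with 0%nat => 0 | 1%nat => 1 | 2%nat => 0 | _ => -1 end.
Definition vy (i : nat) : R :=
  match (i mod 4)%nat with 0%nat => 0 | 1%nat => 0 | 2%nat => 1 | _ => 1/2 end.
Definition V (i : nat) : pt := (vx i, vy i).

Definition sarea (u0 u1 u2 : pt) : R :=
  / 2 * ((fst u1 - fst u0) * (snd u2 - snd u0) - (fst u2 - fst u0) * (snd u1 - snd u0)).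

Definition sum4 (f : nat -> R) : R := f 0%nat + f 1%nat + f 2%nat + f 3%nat.

Definition prob (p : nat -> R) : Prop :=
  (forall i, (i < 4)%nat -> 0 <= p i) /\ sum4 p = 1.

Definition barycenter (p : nat -> R) : pt :=
  (sum4 (fun i => p i * vx i), sum4 (fun i => p i * vy i)).

Definition in_A (x : pt) : Prop := exists p, prob p /\ barycenter p = x.

Definition in_interior (x : pt) : Prop :=
  exists eps, 0 < eps /\
    forall y : pt, (fst y - fst x)^2 + (snd y - snd x)^2 < eps^2 -> in_A y.

Definition xlogx (t : R) : R := if Rle_dec t 0 then 0 else t * ln t.

Definition entropy (p : nat -> R) : R := - sum4 (fun i => xlogx (p i)).

Definition is_gibbs (x : pt) (p : nat -> R) : Prop :=
  prob p /\ barycenter p = x /\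
  forall q, prob q -> barycenter q = x -> entropy q <= entropy p.

Definition wweight (i : nat) (x : pt) : R :=
  sarea (V (i + 3)) (V i) (V (i + 1)) /
  (sarea (V (i + 3)) (V i) x * sarea x (V i) (V (i + 1))).

Definition is_wachspress (x : pt) (p : nat -> R) : Prop :=
  (in_interior x /\
     forall i, (i < 4)%nat -> p i = wweight i x / sum4 (fun j => wweight j x))
  \/
  (exists j t, (j < 4)%nat /\ 0 <= t <= 1 /\
     x = ((1 - t) * vx j + t * vx (j + 1), (1 - t) * vy j + t * vy (j + 1)) /\
     forall i, (i < 4)%nat ->
       p i = if Nat.eqb i j then 1 - t
             else if Nat.eqb i ((j + 1) mod 4) then t else 0).

From Stdlib Require Import Reals Lra Lia.
Open Scope R_scope.

(* The distributions on the four vertices with a given barycenter form a segment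
   in the direction d = (-3/2, 1, -1/2, 1).  A positive distribution p whose
   logarithm is orthogonal to d, i.e. with p0^3 p2 = p1^2 p3^2, maximises the
   entropy on its segment by Gibbs' inequality:
   sum q ln q >= sum q ln p = sum p ln p, with equality only at q = p.
   The Wachspress coordinates are u_i / sum u with u_i products of the edge
   forms, and u1^2 u3^2 - u0^3 u2 factors as a product of edge forms times the
   conic 26 y^2 + (13 x + 12) y - 3 (2 - x - x^2), whose branch in A is the
   curve b(a).  At a = 1 and a = -1 the point is a vertex, where the segment
   reduces to the Dirac distribution. *)

Lemma ln_le_sub1 t : 0 < t -> ln t <= t - 1.
Proof. intros Ht. pose proof (exp_ineq1_le (ln t)) as H. rewrite exp_ln in H; lra. Qed.

Lemma ln_lt_sub1 t : 0 < t -> t <> 1 -> ln t < t - 1.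
Proof.
  intros Ht Ht1. pose proof (exp_ineq1 (ln t) (ln_neq_0 t Ht1 Ht)) as H.
  rewrite exp_ln in H; lra.
Qed.

Lemma xlogx_pos t : 0 < t -> xlogx t = t * ln t.
Proof. intros Ht. unfold xlogx. destruct (Rle_dec t 0); lra. Qed.

Lemma xlogx_cross_ratio p q : 0 < p -> 0 < q ->
  xlogx q - q * ln p = - q * ln (p / q).
Proof.
  intros Hp Hq. rewrite xlogx_pos by lra.
  replace p with (q * (p / q)) at 1 by (field; lra).
  rewrite ln_mult by (try apply Rdiv_lt_0_compat; lra). ring.
Qed.

Lemma xlogx_cross_ge p q : 0 < p -> 0 <= q -> q - p <= xlogx q - q * ln p.
Proof.
  intros Hp Hq. destruct (Req_dec q 0) as [->|Hq0].
  - unfold xlogx. destruct (Rle_dec 0 0); lra.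
  - rewrite xlogx_cross_ratio by lra.
    pose proof (ln_le_sub1 (p / q) ltac:(apply Rdiv_lt_0_compat; lra)).
    replace (q - p) with (- q * (p / q - 1)) by (field; lra).
    nra.
Qed.

Lemma xlogx_cross_gt p q : 0 < p -> 0 <= q -> q <> p -> q - p < xlogx q - q * ln p.
Proof.
  intros Hp Hq Hqp. destruct (Req_dec q 0) as [->|Hq0].
  - unfold xlogx. destruct (Rle_dec 0 0); lra.
  - rewrite xlogx_cross_ratio by lra.
    assert (Hpq : p / q <> 1).
    { intro E. apply Hqp. replace p with (p / q * q) by (field; lra). rewrite E. ring. }
    pose proof (ln_lt_sub1 (p / q) ltac:(apply Rdiv_lt_0_compat; lra) Hpq).
    replace (q - p) with (- q * (p / q - 1)) by (field; lra).
    nra.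
Qed.

Lemma entropy_le_of_cross_entropy p q :
  (forall i, (i < 4)%nat -> 0 < p i) -> prob p -> prob q ->
  sum4 (fun i => q i * ln (p i)) = sum4 (fun i => p i * ln (p i)) ->
  entropy q <= entropy p /\
  (entropy q = entropy p -> forall i, (i < 4)%nat -> q i = p i).
Proof.
  intros Hp [_ Hsp] [Hq Hsq] Hcross.
  assert (Hge : forall i, (i < 4)%nat -> q i - p i <= xlogx (q i) - q i * ln (p i))
    by (intros i Hi; apply xlogx_cross_ge; auto).
  pose proof (Hge 0%nat ltac:(lia)); pose proof (Hge 1%nat ltac:(lia)).
  pose proof (Hge 2%nat ltac:(lia)); pose proof (Hge 3%nat ltac:(lia)).
  unfold entropy, sum4 in *. rewrite !(xlogx_pos (p _)) by (apply Hp; lia).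
  split; [lra|].
  intros Heq i Hi. destruct (Req_dec (q i) (p i)) as [|Hne]; [assumption|exfalso].
  pose proof (xlogx_cross_gt _ _ (Hp i Hi) (Hq i Hi) Hne).
  destruct i as [|[|[|[|i]]]]; [lra..|lia].
Qed.

Lemma entropy_ext p q : (forall i, (i < 4)%nat -> q i = p i) -> entropy q = entropy p.
Proof.
  intros E. unfold entropy, sum4.
  rewrite (E 0%nat), (E 1%nat), (E 2%nat), (E 3%nat) by lia. reflexivity.
Qed.

Lemma gibbs_of_strict_max x p :
  prob p -> barycenter p = x ->
  (forall q, prob q -> barycenter q = x ->
     entropy q <= entropy p /\
     (entropy q = entropy p -> forall i, (i < 4)%nat -> q i = p i)) ->
  is_gibbs x p /\ (forall q, is_gibbs x q -> forall i, (i < 4)%nat -> q i = p i).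
Proof.
  intros Hp Hb Hmax. split.
  - split; [exact Hp|split; [exact Hb|]]. intros q Hq Hbq. apply Hmax; auto.
  - intros q [Hq [Hbq Hqmax]]. apply (Hmax q Hq Hbq).
    apply Rle_antisym; [apply Hmax|apply Hqmax]; auto.
Qed.

Lemma fiber_sum_eq p q f :
  sum4 q = sum4 p -> barycenter q = barycenter p ->
  3 * f 0%nat + f 2%nat = 2 * f 1%nat + 2 * f 3%nat ->
  sum4 (fun i => q i * f i) = sum4 (fun i => p i * f i).
Proof.
  intros Hs Hb Hf.
  unfold barycenter, sum4, vx, vy in *. simpl in Hb. injection Hb as Hbx Hby.
  assert (E1 : q 1%nat = p 1%nat + (q 3%nat - p 3%nat)) by lra.
  assert (E2 : q 2%nat = p 2%nat - (q 3%nat - p 3%nat) / 2) by lra.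
  assert (E0 : q 0%nat = p 0%nat - 3 * (q 3%nat - p 3%nat) / 2) by lra.
  rewrite E0, E1, E2.
  replace (f 0%nat) with ((2 * f 1%nat + 2 * f 3%nat - f 2%nat) / 3) by lra.
  field.
Qed.

Definition on_equator (z : pt) : Prop :=
  exists p : nat -> R,
    is_wachspress z p /\ is_gibbs z p /\
    (forall q, is_gibbs z q -> forall i, (i < 4)%nat -> q i = p i).

Definition dirac (j i : nat) : R := if Nat.eqb i j then 1 else 0.

Lemma prob_dirac j : (j < 4)%nat -> prob (dirac j).
Proof.
  intros Hj. split.
  - intros i _. unfold dirac. destruct (Nat.eqb i j); lra.
  - unfold sum4, dirac. destruct j as [|[|[|[|j]]]]; simpl; [lra..|lia].
Qed.

Lemma barycenter_dirac j : (j < 4)%nat -> barycenter (dirac j) = V j.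
Proof.
  intros Hj. unfold barycenter, sum4, dirac, V, vx, vy.
  destruct j as [|[|[|[|j]]]]; simpl; [f_equal; field..|lia].
Qed.

Lemma barycenter_eq_vertex q j :
  (j < 4)%nat -> prob q -> barycenter q = V j ->
  forall i, (i < 4)%nat -> q i = dirac j i.
Proof.
  intros Hj [Hq Hs] Hb i Hi.
  pose proof (Hq 0%nat ltac:(lia)); pose proof (Hq 1%nat ltac:(lia)).
  pose proof (Hq 2%nat ltac:(lia)); pose proof (Hq 3%nat ltac:(lia)).
  unfold barycenter, sum4, V, vx, vy, dirac in *. simpl in Hb.
  destruct j as [|[|[|[|j]]]]; try lia; simpl in Hb; injection Hb as Hbx Hby;
    destruct i as [|[|[|[|i]]]]; simpl; lra || lia.
Qed.

Lemma vertex_in_A_on_equator j z : (j < 4)%nat -> z = V j -> in_A z /\ on_equator z.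
Proof.
  intros Hj ->.
  assert (Hfiber : forall q, prob q -> barycenter q = V j ->
            forall i, (i < 4)%nat -> q i = dirac j i)
    by (intros q Hq Hb; apply barycenter_eq_vertex; auto).
  split; [exists (dirac j); split; [apply prob_dirac|apply barycenter_dirac]; auto|].
  exists (dirac j). split.
  - right. exists j, 0. repeat split; [lia|lra|lra| |].
    + unfold V. f_equal; ring.
    + intros i _. unfold dirac.
      destruct (Nat.eqb i j); [ring|destruct (Nat.eqb i ((j + 1) mod 4)); reflexivity].
  - apply gibbs_of_strict_max; [apply prob_dirac|apply barycenter_dirac|]; auto.
    intros q Hq Hb. rewrite (entropy_ext (dirac j) q) by (apply Hfiber; auto).
    split; [lra|intros _; apply Hfiber; auto].
Qed.

(* [edge_form i] vanishes on the edge [V i, V (i + 1)] and is positive inside A. *)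
Definition edge_form (i : nat) (x y : R) : R :=
  match i with
  | 0%nat => y
  | 1%nat => 1 - x - y
  | 2%nat => 1 - y + x / 2
  | _ => y + x / 2
  end.

(* Proportional to the Wachspress weights (see [wweight_eq]) but defined up to
   the boundary. *)
Definition wach_weight (i : nat) (x y : R) : R :=
  match i with
  | 0%nat => edge_form 1 x y * edge_form 2 x y / 2
  | 1%nat => edge_form 2 x y * edge_form 3 x y
  | 2%nat => 3 / 2 * edge_form 3 x y * edge_form 0 x y
  | _ => edge_form 0 x y * edge_form 1 x y
  end.

Definition wach_sum (x y : R) : R := sum4 (fun i => wach_weight i x y).

Definition wach_coord (x y : R) (i : nat) : R := wach_weight i x y / wach_sum x y.

Section InsideA.

Variables x y : R.
Hypothesis edge_pos : forall i, (i < 4)%nat -> 0 < edge_form i x y.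

Lemma wach_weight_pos i : (i < 4)%nat -> 0 < wach_weight i x y.
Proof.
  intros Hi.
  pose proof (edge_pos 0%nat ltac:(lia)); pose proof (edge_pos 1%nat ltac:(lia)).
  pose proof (edge_pos 2%nat ltac:(lia)); pose proof (edge_pos 3%nat ltac:(lia)).
  destruct i as [|[|[|[|i]]]]; cbn [wach_weight]; try lia; unfold Rdiv;
    repeat apply Rmult_lt_0_compat; lra.
Qed.

Lemma wach_sum_pos : 0 < wach_sum x y.
Proof.
  pose proof (wach_weight_pos 0%nat ltac:(lia)); pose proof (wach_weight_pos 1%nat ltac:(lia)).
  pose proof (wach_weight_pos 2%nat ltac:(lia)); pose proof (wach_weight_pos 3%nat ltac:(lia)).
  unfold wach_sum, sum4. lra.
Qed.

Lemma wach_coord_pos i : (i < 4)%nat -> 0 < wach_coord x y i.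
Proof.
  intros Hi. apply Rdiv_lt_0_compat; [apply wach_weight_pos; auto|apply wach_sum_pos].
Qed.

Lemma prob_wach_coord : prob (wach_coord x y).
Proof.
  split; [intros i Hi; apply Rlt_le, wach_coord_pos; auto|].
  pose proof wach_sum_pos. unfold wach_coord, sum4. unfold wach_sum, sum4 in *.
  field. lra.
Qed.

End InsideA.

Lemma barycenter_wach_coord x y : wach_sum x y <> 0 -> barycenter (wach_coord x y) = (x, y).
Proof.
  intros HS. unfold barycenter, wach_coord, wach_sum, sum4, vx, vy; simpl.
  f_equal; field; intro E; apply HS; unfold wach_sum, sum4; simpl; lra.
Qed.

Lemma in_A_of_edge_pos x y :
  (forall i, (i < 4)%nat -> 0 < edge_form i x y) -> in_A (x, y).
Proof.
  intros Hpos. exists (wach_coord x y). split; [apply prob_wach_coord; auto|].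
  apply barycenter_wach_coord. apply Rgt_not_eq, wach_sum_pos; auto.
Qed.

Lemma coord_lt_of_dist_lt d f e : 0 < e -> d ^ 2 + f ^ 2 < e ^ 2 -> - e < d < e.
Proof. intros He Hd. split; nra. Qed.

Lemma interior_of_edge_pos x y :
  (forall i, (i < 4)%nat -> 0 < edge_form i x y) -> in_interior (x, y).
Proof.
  intros Hpos.
  pose proof (Hpos 0%nat ltac:(lia)); pose proof (Hpos 1%nat ltac:(lia)).
  pose proof (Hpos 2%nat ltac:(lia)); pose proof (Hpos 3%nat ltac:(lia)).
  set (m := Rmin (Rmin (edge_form 0 x y) (edge_form 1 x y))
                 (Rmin (edge_form 2 x y) (edge_form 3 x y))).
  assert (Hm : 0 < m) by (unfold m; repeat apply Rmin_glb_lt; assumption).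
  assert (Hm0 : m <= edge_form 0 x y) by (unfold m; eapply Rle_trans; apply Rmin_l).
  assert (Hm1 : m <= edge_form 1 x y) by (unfold m; eapply Rle_trans; [apply Rmin_l|apply Rmin_r]).
  assert (Hm2 : m <= edge_form 2 x y) by (unfold m; eapply Rle_trans; [apply Rmin_r|apply Rmin_l]).
  assert (Hm3 : m <= edge_form 3 x y) by (unfold m; eapply Rle_trans; apply Rmin_r).
  exists (m / 2). split; [lra|]. intros [z w] Hzw. simpl in Hzw.
  assert (Hz := coord_lt_of_dist_lt (z - x) (w - y) (m / 2) ltac:(lra) Hzw).
  assert (Hw := coord_lt_of_dist_lt (w - y) (z - x) (m / 2) ltac:(lra)
                  ltac:(rewrite Rplus_comm; exact Hzw)).
  apply in_A_of_edge_pos. intros i Hi.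
  simpl in *. destruct i as [|[|[|[|i]]]]; simpl; [lra..|lia].
Qed.

Lemma wweight_eq i x y :
  (i < 4)%nat -> (forall j, (j < 4)%nat -> edge_form j x y <> 0) ->
  wweight i (x, y) =
  2 * wach_weight i x y /
  (edge_form 0 x y * edge_form 1 x y * edge_form 2 x y * edge_form 3 x y).
Proof.
  intros Hi Hne.
  pose proof (Hne 0%nat ltac:(lia)); pose proof (Hne 1%nat ltac:(lia)).
  pose proof (Hne 2%nat ltac:(lia)); pose proof (Hne 3%nat ltac:(lia)).
  simpl in *.
  destruct i as [|[|[|[|i]]]]; try lia;
    unfold wweight, sarea, V, vx, vy; simpl; field; repeat split; lra.
Qed.

Lemma wachspress_wach_coord x y :
  (forall i, (i < 4)%nat -> 0 < edge_form i x y) -> is_wachspress (x, y) (wach_coord x y).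
Proof.
  intros Hpos. left. split; [apply interior_of_edge_pos; auto|].
  assert (Hne : forall j, (j < 4)%nat -> edge_form j x y <> 0)
    by (intros j Hj; apply Rgt_not_eq, Hpos, Hj).
  pose proof (wach_sum_pos x y Hpos) as HS.
  pose proof (Hne 0%nat ltac:(lia)); pose proof (Hne 1%nat ltac:(lia)).
  pose proof (Hne 2%nat ltac:(lia)); pose proof (Hne 3%nat ltac:(lia)).
  intros i Hi. unfold sum4. rewrite !wweight_eq by (auto; lia).
  unfold wach_coord, wach_sum, sum4 in *. field. repeat split; lra.
Qed.

Lemma ln_balance p :
  (forall i, (i < 4)%nat -> 0 < p i) ->
  p 0%nat ^ 3 * p 2%nat = p 1%nat ^ 2 * p 3%nat ^ 2 ->
  3 * ln (p 0%nat) + ln (p 2%nat) = 2 * ln (p 1%nat) + 2 * ln (p 3%nat).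
Proof.
  intros Hp E.
  pose proof (Hp 0%nat ltac:(lia)); pose proof (Hp 1%nat ltac:(lia)).
  pose proof (Hp 2%nat ltac:(lia)); pose proof (Hp 3%nat ltac:(lia)).
  apply (f_equal ln) in E.
  rewrite !ln_mult, !ln_pow in E by (assumption || apply pow_lt; assumption).
  simpl in E. lra.
Qed.

Definition equator_conic (x y : R) : R := 26 * y ^ 2 + (13 * x + 12) * y - 3 * (2 - x - x ^ 2).

Lemma wach_weight_balance x y :
  wach_weight 1 x y ^ 2 * wach_weight 3 x y ^ 2 - wach_weight 0 x y ^ 3 * wach_weight 2 x y =
  edge_form 0 x y * edge_form 1 x y ^ 2 * edge_form 2 x y ^ 2 * edge_form 3 x y *
  equator_conic x y / 32.
Proof. simpl. unfold equator_conic. field. Qed.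

Lemma on_equator_of_conic x y :
  (forall i, (i < 4)%nat -> 0 < edge_form i x y) -> equator_conic x y = 0 -> on_equator (x, y).
Proof.
  intros Hpos Hconic.
  pose proof (wach_coord_pos x y Hpos) as Hp.
  pose proof (prob_wach_coord x y Hpos) as Hprob.
  pose proof (wach_sum_pos x y Hpos) as HS.
  set (p := wach_coord x y) in *.
  assert (Hbar : barycenter p = (x, y)) by (apply barycenter_wach_coord; lra).
  assert (Hbal : p 0%nat ^ 3 * p 2%nat = p 1%nat ^ 2 * p 3%nat ^ 2).
  { pose proof (wach_weight_balance x y) as W. rewrite Hconic in W.
    unfold p, wach_coord. field_simplify; [f_equal; lra|lra..]. }
  exists p. split; [apply wachspress_wach_coord; auto|].
  apply gibbs_of_strict_max; auto.
  intros q Hq Hbq. apply entropy_le_of_cross_entropy; auto.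
  apply fiber_sum_eq.
  - destruct Hq as [_ ->], Hprob as [_ ->]. reflexivity.
  - rewrite Hbq, Hbar. reflexivity.
  - apply ln_balance; auto.
Qed.

Lemma equator_point a s :
  -1 <= a <= 1 -> 0 <= s -> s * s = 25 ^ 2 + 11 * 13 * (1 - a ^ 2) ->
  let b := (-12 - 13 * a + s) / (4 * 13) in
  in_A (a, b) /\ on_equator (a, b).
Proof.
  intros Ha Hs Hss b.
  destruct (Req_dec a 1) as [->|Ha1].
  { assert (s = 25) by nra. subst s.
    apply (vertex_in_A_on_equator 1); [lia|].
    unfold b, V, vx, vy; simpl. f_equal. field. }
  destruct (Req_dec a (-1)) as [->|Ham1].
  { assert (s = 25) by nra. subst s.
    apply (vertex_in_A_on_equator 3); [lia|].
    unfold b, V, vx, vy; simpl. f_equal. field. }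
  assert (Ha' : -1 < a < 1) by lra.
  assert (Hpos : forall i, (i < 4)%nat -> 0 < edge_form i a b).
  { (* s^2 - k^2 is a positive multiple of (1 +- a) (2 +- a) for each bound k *)
    assert (12 + 13 * a < s /\ 12 - 13 * a < s /\ s < 64 - 39 * a /\ s < 64 + 39 * a)
      by (repeat split; nra).
    intros i Hi. unfold b. destruct i as [|[|[|[|i]]]]; simpl; [lra..|lia]. }
  assert (Hconic : equator_conic a b = 0).
  { replace (equator_conic a b) with ((s * s - (768 - 143 * a ^ 2)) / 104)
      by (unfold equator_conic, b; field).
    rewrite Hss. field. }
  split; [apply in_A_of_edge_pos | apply on_equator_of_conic]; assumption.
Qed.

Theorem theorem5p10 (a : R) (ha : -1 <= a <= 1) :
  let b := (-12 - 13 * a + sqrt (25 ^ 2 + 11 * 13 * (1 - a ^ 2))) / (4 * 13) in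
  in_A (a, b) /\
  exists p : nat -> R,
    is_wachspress (a, b) p /\ is_gibbs (a, b) p /\
    (forall q, is_gibbs (a, b) q -> forall i, (i < 4)%nat -> q i = p i).
Proof.
  apply equator_point; [exact ha | apply sqrt_pos | apply sqrt_sqrt; nra].
Qed.
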